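(* Let $n\in\mathbb{N}$, $\varkappa\in\mathbb{N}^n$, $N=|\varkappa|$, $m\in\mathbb{N}_0$, and let $y_1,\ldots,y_n$ be indeterminates (or pairwise distinct elements of a field). Then \[ \hom_m\bigl(y^{[\varkappa]}\bigr)=\frac{\det G_{(m)}(y,\varkappa)}{\det G_\emptyset(y,\varkappa)}, \] where $(m)$ is the one-part partition (and $(0)=\emptyset$).
   Context: $\mathbb{N}=\{1,2,\ldots\}$, $\mathbb{N}_0=\{0,1,2,\ldots\}$. $\hom_m(x_1,\ldots,x_N)=\sum_{k\in\mathbb{N}_0^N,\,|k|=m}x_1^{k_1}\cdots x_N^{k_N}$ is the complete homogeneous symmetric polynomial. For $\varkappa\in\mathbb{N}^n$, $y^{[\varkappa]}$ denotes the list of length $|\varkappa|$ in which $y_1$ is repeated $\varkappa_1$ times, then $y_2$ repeated $\varkappa_2$ times, etc. Partitions are extended by zeros to length $N$. Each $p\in\{1,\ldots,N\}$ is written uniquely as $p=\varkappa_1+\cdots+\varkappa_{q-1}+r$ with $1\le q\le n$, $1\le r\le\varkappa_q$. For a partition $\lambda$ of length $\le N$, $G_\lambda(y,\varkappa)$ is the $N\times N$ matrix with entries $G_\lambda(y,\varkappa)_{j,p}=\binom{N+\lambda_j-j}{r-1}y_q^{N+\lambda_j-j-r+1}$ if $N+\lambda_j-j-r+1\ge0$ and $0$ otherwise. *)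

From HB Require Import structures.
From mathcomp Require Import all_boot all_order all_algebra.
Set Implicit Arguments. Unset Strict Implicit. Unset Printing Implicit Defensive.
Import Order.TTheory GRing.Theory Num.Theory.
Local Open Scope ring_scope.

Section Defs.
Variable F : fieldType.

(* complete homogeneous symmetric polynomial h_m evaluated at the list s:
   sum over k in N_0^{size s} with |k| = m of prod_i s_i^{k_i}
   (each k_i <= m, so k ranges over functions into 'I_m.+1). *)
Definition hcomplete (m : nat) (s : seq F) : F :=
  \sum_(k : {ffun 'I_(size s) -> 'I_m.+1} | (\sum_(i < size s) (k i : nat) == m)%N)
     \prod_(i < size s) s`_i ^+ (k i : nat).

Variables (n : nat) (kappa : 'I_n -> nat) (y : 'I_n -> F).

Definition Nk : nat := (\sum_(i < n) kappa i)%N.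

Definition yrep : seq F := flatten [seq nseq (kappa i) (y i) | i <- enum 'I_n].

(* for the 0-indexed column p (i.e. column p+1), the pair (y_q, r) where
   p+1 = kappa_1 + ... + kappa_{q-1} + r with 1 <= r <= kappa_q *)
Definition colinfo : seq (F * nat) :=
  flatten [seq [seq (y i, r) | r <- iota 1 (kappa i)] | i <- enum 'I_n].

(* partitions are given as seq nat, extended by zeros; lam_j = nth 0 lam (j-1) *)
Definition Gmx (lam : seq nat) : 'M[F]_Nk :=
  \matrix_(j < Nk, p < Nk)
    let yq := (nth (0, 1%N) colinfo p).1 in
    let r := (nth (0, 1%N) colinfo p).2 in
    let e := (Nk + nth 0%N lam j - j.+1)%N in   (* N + lam_j - j, with j 1-indexed *)
    if (r.-1 <= e)%N then ('C(e, r.-1))%:R * yq ^+ (e - r.-1) else 0.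

End Defs.

From HB Require Import structures.
From mathcomp Require Import all_boot all_order all_algebra.
From mathcomp Require Import ring zify.
Set Implicit Arguments. Unset Strict Implicit. Unset Printing Implicit Defensive.
Import GRing.Theory.
Local Open Scope ring_scope.

(* Let P = prod_q (X - y_q)^kappa_q and, for the column p <-> (q, r), let L_p f be the
   (r-1)-th Taylor coefficient of f at y_q, so that row j of G_lam is the vector
   (L_p X^(N + lam_j - j))_p.  The L_p vanish exactly on the multiples of P, and a
   nonzero polynomial of degree < N is not one, so the rows X^(N-1), ..., X^0 of
   G_empty are independent.  G_(m) differs from G_empty only in its first row,
   L(X^(N-1+m)) = L(X^(N-1+m) mod P); the remainder has coefficient h_m(y^[kappa])
   at X^(N-1), and its lower terms are combinations of the other rows of G_empty. *)

Lemma det_row_combination (R : comNzRingType) n (A B : 'M[R]_n) (i0 : 'I_n)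
    (c : 'rV_n) :
  row i0 B = c *m A -> (forall i, i != i0 -> row i B = row i A) ->
  \det B = c 0 i0 * \det A.
Proof.
move=> rowB0 rowB.
pose E := \matrix_(i, k) if i == i0 then c 0 k else (i == k)%:R.
have -> : B = E *m A.
  apply/row_matrixP => i; rewrite row_mul mulmx_sum_row.
  have [-> | i_i0] := eqVneq i i0.
    by rewrite rowB0 mulmx_sum_row; apply: eq_bigr => k _; rewrite !mxE eqxx.
  rewrite rowB // (bigD1 i) //= big1 ?addr0 => [|k ki].
    by rewrite !mxE (negbTE i_i0) eqxx scale1r.
  by rewrite !mxE (negbTE i_i0) eq_sym (negbTE ki) scale0r.
rewrite det_mulmx (expand_det_col _ i0) (bigD1 i0) //= big1 ?addr0 => [|i /negbTE i_i0].
  rewrite mxE eqxx /cofactor -signr_odd addnn odd_double expr0 mul1r.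
  have -> : row' i0 (col' i0 E) = 1%:M.
    apply/matrixP => a b; rewrite !mxE eq_sym (negbTE (neq_lift _ _)).
    by rewrite (inj_eq lift_inj).
  by rewrite det1 mulr1.
by rewrite mxE i_i0 mul0r.
Qed.

Lemma eq_coef_prod_le (R : nzRingType) (I : Type) (r : seq I) (A B : I -> {poly R}) k :
  (forall i j, (j <= k)%N -> (A i)`_j = (B i)`_j) ->
  forall j, (j <= k)%N -> (\prod_(i <- r) A i)`_j = (\prod_(i <- r) B i)`_j.
Proof.
move=> eqAB; elim: r => [|x r IHr] j le_jk; first by rewrite !big_nil.
rewrite !big_cons !coefM; apply: eq_bigr => i _.
rewrite eqAB ?IHr //; last by rewrite (leq_trans _ le_jk) // -ltnS.
exact: leq_trans (leq_subr _ _) le_jk.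
Qed.

Section CompleteHomogeneous.
Variable F : fieldType.
Implicit Types (a : F) (s : seq F).

Definition trunc_geom m a : {poly F} := \poly_(j < m.+1) a ^+ j.

Lemma hcompleteE m s : hcomplete m s = (\prod_(i < size s) trunc_geom m s`_i)`_m.
Proof.
have -> : \prod_(i < size s) trunc_geom m s`_i =
          \prod_(i < size s) \sum_(j : 'I_m.+1) (s`_i ^+ j)%:P * 'X^j.
  apply: eq_bigr => i _; rewrite /trunc_geom poly_def.
  by under [RHS]eq_bigr do rewrite mul_polyC.
rewrite /hcomplete bigA_distr_bigA coef_sum big_mkcond /=; apply: eq_bigr => k _.
rewrite big_split /= -rmorph_prod prodrXr coefCM coefXn eq_sym.
by case: eqP; rewrite ?mulr1 ?mulr0.
Qed.

Lemma hcomplete_nil m : hcomplete m ([::] : seq F) = (m == 0)%:R.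
Proof. by rewrite hcompleteE big_ord0 coef1. Qed.

Lemma hcomplete_cons m a s :
  hcomplete m (a :: s) = \sum_(i < m.+1) a ^+ i * hcomplete (m - i) s.
Proof.
rewrite hcompleteE /= big_ord_recl coefM; apply: eq_bigr => i _.
rewrite coef_poly ltn_ord hcompleteE; congr (_ * _).
apply: (@eq_coef_prod_le _ _ _ _ _ (m - i)) => // j k le_km.
by rewrite !coef_poly !ltnS le_km (leq_trans le_km (leq_subr i m)).
Qed.

Lemma hcomplete0 s : hcomplete 0 s = 1.
Proof.
elim: s => [|a s IHs]; first by rewrite hcomplete_nil.
by rewrite hcomplete_cons big_ord1 expr0 mul1r.
Qed.

Lemma hcompleteS_cons m a s :
  hcomplete m.+1 (a :: s) = a * hcomplete m (a :: s) + hcomplete m.+1 s.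
Proof.
rewrite !hcomplete_cons big_ord_recl expr0 mul1r subn0 addrC mulr_sumr.
by congr (_ + _); apply: eq_bigr => i _; rewrite exprS mulrA.
Qed.

End CompleteHomogeneous.

Section RemainderOfPowers.
Variable F : fieldType.
Implicit Types (a : F) (s t : seq F).

Definition prod_XsubC s : {poly F} := \prod_(x <- s) ('X - x%:P).

Lemma prod_XsubC_monic s : prod_XsubC s \is monic.
Proof. exact: monic_prod_XsubC. Qed.

Lemma size_prod_XsubC_seq s : size (prod_XsubC s) = (size s).+1.
Proof. exact: size_prod_XsubC. Qed.

Lemma coef_modp_XsubC_mul a t g :
  ((('X - a%:P) * g) %% prod_XsubC (a :: t))`_(size t) = (g %% prod_XsubC t)`_(size t).-1.
Proof.
set P := prod_XsubC t; set r := g %% P.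
have le_r_t : (size r <= size t)%N.
  by rewrite -ltnS -size_prod_XsubC_seq ltn_modp monic_neq0 ?prod_XsubC_monic.
have -> : ('X - a%:P) * g %% prod_XsubC (a :: t) = ('X - a%:P) * r.
  rewrite {1}(divp_eq g P) -/r mulrDr mulrCA /prod_XsubC big_cons -/(prod_XsubC t) -/P.
  rewrite modp_addl_mul_small // (leq_ltn_trans (size_mul_leq _ _)) // size_XsubC.
  by rewrite size_Mmonic ?polyXsubC_eq0 ?prod_XsubC_monic // size_XsubC size_prod_XsubC_seq.
rewrite mulrBl coefB coefXM coefCM (nth_default 0 le_r_t) mulr0 subr0.
by case: (size t) le_r_t => // /size_poly_leq0P ->; rewrite coef0.
Qed.

Lemma coef_modp_Xn s m : s != [::] ->
  ('X^((size s).-1 + m) %% prod_XsubC s)`_(size s).-1 = hcomplete m s.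
Proof.
elim: s m => [//|a t IHt] m _ /=.
elim: m => [|m IHm].
  rewrite addn0 modp_small ?coefXn ?eqxx ?hcomplete0 //.
  by rewrite size_polyXn size_prod_XsubC_seq.
have -> : 'X^(size t + m.+1) = a *: 'X^(size t + m) + ('X - a%:P) * 'X^(size t + m).
  by rewrite addnS exprS -mul_polyC; ring.
rewrite modpD modpZl coefD coefZ IHm coef_modp_XsubC_mul hcompleteS_cons.
congr (_ + _); case: t IHt {IHm} => [|b t] IHt.
  by rewrite /prod_XsubC big_nil modp1 coef0 hcomplete_nil.
by have := IHt m.+1 isT; rewrite /= addnS.
Qed.

End RemainderOfPowers.

Section TaylorCoefficients.
Variable F : fieldType.
Implicit Types (a : F) (f g : {poly F}).

Definition taylor_coef a k f : F := (f \Po ('X + a%:P))`_k.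

Lemma taylor_coef_is_scalar a k : scalar (taylor_coef a k).
Proof. by move=> c f g; rewrite /taylor_coef comp_polyD comp_polyZ coefD coefZ. Qed.

Lemma taylor_coef_Xn a k e :
  taylor_coef a k 'X^e = if (k <= e)%N then 'C(e, k)%:R * a ^+ (e - k) else 0.
Proof.
rewrite /taylor_coef rmorphXn /= comp_polyX addrC exprDn coef_sum.
under eq_bigr => i _ do rewrite coefMn -rmorphXn coefCM coefXn.
case: ifP => le_ke.
  rewrite (bigD1 (Ordinal (le_ke : (k < e.+1)%N))) //= eqxx mulr1 mulr_natl big1 ?addr0 //.
  by move=> i /negbTE ik; rewrite -(inj_eq val_inj) /= eq_sym in ik; rewrite ik mulr0 mul0rn.
rewrite big1 // => i _; case: eqP => [ki | _]; last by rewrite mulr0 mul0rn.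
by move: (ltn_ord i); rewrite -ki ltnS le_ke.
Qed.

Lemma taylor_coef_XsubC_expM a k e g :
  (k < e)%N -> taylor_coef a k (('X - a%:P) ^+ e * g) = 0.
Proof.
move=> lt_ke; rewrite /taylor_coef rmorphM rmorphXn rmorphB /= comp_polyX comp_polyC.
by rewrite addrK coefXnM lt_ke.
Qed.

Lemma dvdp_XsubC_exp_taylor a e f :
  (forall k, (k < e)%N -> taylor_coef a k f = 0) -> ('X - a%:P) ^+ e %| f.
Proof.
move=> taylor0; set h := f \Po ('X + a%:P).
have low0 : take_poly e h = 0.
  by apply/polyP => i; rewrite coef_take_poly coef0; case: ifP => // /taylor0.
rewrite -(comp_polyXaddC_K f a) -/h -(poly_take_drop e h) low0 add0r.
by rewrite rmorphM rmorphXn /= comp_polyX dvdp_mull.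
Qed.

End TaylorCoefficients.

Lemma prod_XsubC_exp_dvdp (F : fieldType) (I : eqType) (r : seq I) (a : I -> F)
    (e : I -> nat) (f : {poly F}) :
  injective a -> uniq r -> (forall i, i \in r -> ('X - (a i)%:P) ^+ e i %| f) ->
  \prod_(i <- r) ('X - (a i)%:P) ^+ e i %| f.
Proof.
move=> inj_a; elim: r => [|i r IHr] /=; first by rewrite big_nil dvd1p.
case/andP=> i_r uniq_r dvd_f; rewrite big_cons Gauss_dvdp; last first.
  apply: coprimep_expl; rewrite coprimep_sym coprimep_XsubC rootE horner_prod.
  rewrite prodf_seq_neq0; apply/allP => j j_r /=.
  rewrite horner_exp hornerXsubC expf_neq0 // subr_eq0.
  by apply: contra i_r => /eqP /inj_a ->.
by rewrite dvd_f ?mem_head // IHr // => j j_r; rewrite dvd_f // in_cons j_r orbT.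
Qed.

Section HermiteMatrix.
Variables (F : fieldType) (n : nat) (kappa : 'I_n -> nat) (y : 'I_n -> F).
Local Notation N := (Nk kappa).
Local Notation P := (prod_XsubC (yrep kappa y)).
Local Notation col p := (nth (0, 1%N) (colinfo kappa y) p).

Lemma size_colinfo : size (colinfo kappa y) = N.
Proof.
rewrite size_flatten /shape -map_comp sumnE big_map big_enum /=.
by apply: eq_bigr => i _; rewrite /= size_map size_iota.
Qed.

Lemma size_yrep : size (yrep kappa y) = N.
Proof.
rewrite size_flatten /shape -map_comp sumnE big_map big_enum /=.
by apply: eq_bigr => i _; rewrite /= size_nseq.
Qed.

Lemma prod_XsubC_yrep : P = \prod_(i < n) ('X - (y i)%:P) ^+ kappa i.
Proof.
rewrite /prod_XsubC big_flatten big_map big_enum /=; apply: eq_bigr => i _.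
by rewrite big_nseq; elim: (kappa i) => [|k IHk] //=; rewrite IHk exprS.
Qed.

Lemma nth_colinfo p : (p < N)%N ->
  exists q : 'I_n, exists2 r, col p = (y q, r.+1) & (r < kappa q)%N.
Proof.
rewrite -size_colinfo => /(mem_nth (0, 1%N)) /flattenP [t /mapP [q _ ->]] /mapP [r].
rewrite mem_iota => /andP [r_gt0 r_le] ->; exists q, r.-1; first by rewrite prednK.
by rewrite -ltnS prednK // -(addn1 (kappa q)) addnC.
Qed.

Lemma nth_colinfo_onto (q : 'I_n) r : (r < kappa q)%N ->
  exists p : 'I_N, col p = (y q, r.+1).
Proof.
move=> lt_r_kq.
have col_qr : (y q, r.+1) \in colinfo kappa y.
  apply/flattenP; exists [seq (y q, r') | r' <- iota 1 (kappa q)].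
    by apply: map_f; rewrite mem_enum.
  by apply: map_f; rewrite mem_iota /= add1n ltnS.
have lt_index : (index (y q, r.+1) (colinfo kappa y) < N)%N.
  by rewrite -size_colinfo index_mem.
by exists (Ordinal lt_index); rewrite /= nth_index.
Qed.

Definition hermite_row (f : {poly F}) : 'rV[F]_N :=
  \row_p taylor_coef (col p).1 (col p).2.-1 f.

Lemma hermite_row_is_linear : linear hermite_row.
Proof. by move=> c f g; apply/rowP => p; rewrite !mxE taylor_coef_is_scalar. Qed.

HB.instance Definition _ :=
  GRing.isLinear.Build F {poly F} 'rV[F]_N _ hermite_row hermite_row_is_linear.

Lemma row_Gmx lam (j : 'I_N) :
  row j (Gmx kappa y lam) = hermite_row 'X^(N + nth 0%N lam j - j.+1).
Proof. by apply/rowP => p; rewrite !mxE taylor_coef_Xn. Qed.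

Lemma hermite_row_prodM Q : hermite_row (P * Q) = 0.
Proof.
apply/rowP => p; rewrite !mxE; have [q [r -> lt_r_kq]] := nth_colinfo (ltn_ord p).
by rewrite prod_XsubC_yrep (bigD1 q) //= -mulrA taylor_coef_XsubC_expM.
Qed.

Lemma hermite_row_modp f : hermite_row (f %% P) = hermite_row f.
Proof. by rewrite {2}(divp_eq f P) linearD /= mulrC hermite_row_prodM add0r. Qed.

Definition rv_poly (v : 'rV[F]_N) : {poly F} := \sum_(j < N) v 0 j *: 'X^(N - j.+1).

Lemma hermite_row_rv_poly v : hermite_row (rv_poly v) = v *m Gmx kappa y [::].
Proof.
rewrite linear_sum mulmx_sum_row; apply: eq_bigr => j _.
by rewrite linearZ row_Gmx nth_nil addn0.
Qed.

Lemma coef_rv_poly v (j : 'I_N) : (rv_poly v)`_(N - j.+1) = v 0 j.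
Proof.
rewrite coef_sum (bigD1 j) //= coefZ coefXn eqxx mulr1 big1 ?addr0 // => k kj.
rewrite coefZ coefXn; case: eqP => [e | _]; last by rewrite mulr0.
by move/eqP: kj; case; apply: ord_inj; have := ltn_ord j; have := ltn_ord k; lia.
Qed.

Lemma size_rv_poly v : (size (rv_poly v) <= N)%N.
Proof.
rewrite (leq_trans (size_sum _ _ _)) //; apply/bigmax_leqP => j _.
by rewrite (leq_trans (size_scale_leq _ _)) // size_polyXn; have := ltn_ord j; lia.
Qed.

Lemma rv_poly_coefs (f : {poly F}) :
  (size f <= N)%N -> rv_poly (\row_j f`_(N - j.+1)) = f.
Proof.
move=> le_f_N; apply/polyP => i; have [lt_iN | le_Ni] := ltnP i N.
  have lt_jN : (N - i.+1 < N)%N by lia.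
  have := coef_rv_poly (\row_j f`_(N - j.+1)) (Ordinal lt_jN).
  by rewrite mxE /= (_ : N - (N - i.+1).+1 = i)%N //; lia.
by rewrite !nth_default // (leq_trans _ le_Ni) // size_rv_poly.
Qed.

Lemma det_Gmx_nil_neq0 : injective y -> \det (Gmx kappa y [::]) != 0.
Proof.
move=> inj_y; apply/det0P => -[v v_neq0 v_ker].
set f := rv_poly v; have hermite_f0 : hermite_row f = 0 by rewrite hermite_row_rv_poly.
have dvd_Pf : P %| f.
  rewrite prod_XsubC_yrep; apply: prod_XsubC_exp_dvdp => // [|q _].
    exact: index_enum_uniq.
  apply: dvdp_XsubC_exp_taylor => k lt_k_kq; have [p col_p] := nth_colinfo_onto lt_k_kq.
  by have /rowP/(_ p) := hermite_f0; rewrite !mxE col_p.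
have f0 : f = 0.
  apply: contraTeq (size_rv_poly v) => f_neq0; rewrite -ltnNge.
  by have := dvdp_leq f_neq0 dvd_Pf; rewrite size_prod_XsubC_seq size_yrep.
suff v0 : v = 0 by rewrite v0 eqxx in v_neq0.
by apply/rowP => j; rewrite mxE -coef_rv_poly -/f f0 coef0.
Qed.

Lemma det_Gmx_hcomplete m : (0 < N)%N ->
  \det (Gmx kappa y [:: m]) = hcomplete m (yrep kappa y) * \det (Gmx kappa y [::]).
Proof.
move=> N_gt0; set S := 'X^(N.-1 + m) %% P.
have size_S : (size S <= N)%N.
  by rewrite -ltnS -size_yrep -size_prod_XsubC_seq ltn_modp monic_neq0 ?prod_XsubC_monic.
pose c : 'rV_N := \row_j S`_(N - j.+1).
rewrite (@det_row_combination _ _ (Gmx kappa y [::]) _ (Ordinal N_gt0) c).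
- congr (_ * _); rewrite mxE subn1 /S -size_yrep coef_modp_Xn //.
  by rewrite -size_eq0 size_yrep -lt0n.
- rewrite -hermite_row_rv_poly rv_poly_coefs // hermite_row_modp row_Gmx /=.
  by congr (hermite_row 'X^_); lia.
by case=> -[|i] lt_iN // _; rewrite !row_Gmx /= nth_nil.
Qed.

End HermiteMatrix.

Theorem corollary2 (F : fieldType) (n : nat) (kappa : 'I_n -> nat) (y : 'I_n -> F)
    (m : nat) :
  (0 < n)%N -> (forall i, (0 < kappa i)%N) -> injective y ->
  hcomplete m (yrep kappa y) = \det (Gmx kappa y [:: m%N]) / \det (Gmx kappa y [::]).
Proof.
move=> n_gt0 kappa_gt0 inj_y.
have N_gt0 : (0 < Nk kappa)%N by rewrite /Nk (bigD1 (Ordinal n_gt0)) // ltn_addr.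
by rewrite det_Gmx_hcomplete // mulfK // det_Gmx_nil_neq0.
Qed.
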